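(* Let $\Omega$ be a verification operator for $|\Psi\rangle$ with second largest eigenvalue $\beta$ and smallest eigenvalue $\tau$, and take $N=1$. If $\beta\ge1/2$, then $$\zeta(1,\delta,\Omega)=\begin{cases}0,&0\le\delta\le\beta,\\ \frac{\beta(\delta-\beta)}{1-\beta},&\beta\le\delta\le\frac{1+\beta}{2},\\ \frac{\delta(2-\beta)-1}{1-\beta},&\frac{1+\beta}{2}\le\delta\le1.\end{cases}$$ If $\beta<1/2$, then $$\zeta(1,\delta,\Omega)=\begin{cases}0,&0\le\delta\le\beta,\\ \frac{\tau(\delta-\beta)}{1+\tau-2\beta},&\beta\le\delta\le\frac{1+\tau}{2},\\ \delta-\frac12,&\frac{1+\tau}{2}\le\delta\le\frac{1+\beta}{2},\\ \frac{\delta(2-\beta)-1}{1-\beta},&\frac{1+\beta}{2}\le\delta\le1.\end{cases}$$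
   Context: Let $\mathcal H$ be a Hilbert space of finite dimension $D\ge2$ and $|\Psi\rangle\in\mathcal H$ a unit vector. A verification operator for $|\Psi\rangle$ is a Hermitian operator $\Omega$ on $\mathcal H$ with $0\le\Omega\le1$, $\Omega|\Psi\rangle=|\Psi\rangle$, whose eigenvalue $1$ is nondegenerate; its eigenvalues are $1=\lambda_1>\lambda_2\ge\dots\ge\lambda_D\ge0$, with $\beta=\lambda_2$, $\tau=\lambda_D$. For an integer $N\ge1$ and a density operator $\rho$ on $\mathcal H^{\otimes(N+1)}$ put $p_\rho=\mathrm{tr}[(\Omega^{\otimes N}\otimes 1)\rho]$ and $f_\rho=\mathrm{tr}[(\Omega^{\otimes N}\otimes|\Psi\rangle\langle\Psi|)\rho]$, and $\zeta(N,\delta,\Omega)=\min\{f_\rho:p_\rho\ge\delta\}$ for $0\le\delta\le1$, the minimum over permutation-invariant density operators on $\mathcal H^{\otimes(N+1)}$. *)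

From mathcomp Require Import all_boot all_order all_algebra.
From mathcomp Require Import reals.
From mathcomp.real_closed Require Import complex mxtens.

Set Implicit Arguments.
Unset Strict Implicit.
Unset Printing Implicit Defensive.

Import Order.TTheory GRing.Theory Num.Theory.
Local Open Scope ring_scope.
Local Open Scope complex_scope.

Section QDefs.
Variable C : numClosedFieldType.

Definition mxadj {m n : nat} (A : 'M[C]_(m, n)) : 'M[C]_(n, m) :=
  (map_mx Num.conj A)^T.

Definition hermitian {n : nat} (A : 'M[C]_n) : Prop := mxadj A = A.

Definition psdmx {n : nat} (A : 'M[C]_n) : Prop :=
  hermitian A /\ forall v : 'cV[C]_n, 0 <= (mxadj v *m A *m v) 0 0.

Definition verification_operator {D : nat} (Omega : 'M[C]_D) (Psi : 'cV[C]_D) : Prop :=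
  [/\ hermitian Omega, psdmx Omega, psdmx (1 - Omega),
      Omega *m Psi = Psi &
      forall v : 'cV[C]_D, Omega *m v = v -> exists c : C, v = c *: Psi].

Definition densitymx {n : nat} (rho : 'M[C]_n) : Prop := psdmx rho /\ \tr rho = 1.

(* swap operator on H (x) H (Kronecker convention of mxtens):
   swapmx (e_k (x) e_l) = e_l (x) e_k *)
Definition swapmx (D : nat) : 'M[C]_(D * D) :=
  \matrix_(a, b) (((mxtens_unindex a).1 == (mxtens_unindex b).2) &&
                  ((mxtens_unindex a).2 == (mxtens_unindex b).1))%:R.

(* permutation-invariant operator on H^{(x) 2} (the only nontrivial permutation
   of 2 tensor factors is the swap) *)
Definition perm_invariant2 {D : nat} (rho : 'M[C]_(D * D)) : Prop :=
  swapmx D *m rho *m mxadj (swapmx D) = rho.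

Definition p_rho {D : nat} (Omega : 'M[C]_D) (rho : 'M[C]_(D * D)) : C :=
  \tr ((Omega *t (1%:M : 'M[C]_D)) *m rho).

Definition f_rho {D : nat} (Omega : 'M[C]_D) (Psi : 'cV[C]_D) (rho : 'M[C]_(D * D)) : C :=
  \tr ((Omega *t (Psi *m mxadj Psi)) *m rho).

Definition feasible1 {D : nat} (Omega : 'M[C]_D) (delta : C) (rho : 'M[C]_(D * D)) : Prop :=
  [/\ densitymx rho, perm_invariant2 rho & delta <= p_rho Omega rho].

(* "zeta(1, delta, Omega) = z": the minimum of f_rho over permutation-invariant
   density operators with p_rho >= delta exists and equals z *)
Definition zeta1_is {D : nat} (Omega : 'M[C]_D) (Psi : 'cV[C]_D) (delta z : C) : Prop :=
  (exists2 rho, feasible1 Omega delta rho & f_rho Omega Psi rho = z) /\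
  (forall rho, feasible1 Omega delta rho -> z <= f_rho Omega Psi rho).

End QDefs.

Definition sorted_spectrum (R : realType) {D : nat} (Omega : 'M[R[i]]_D)
    (lam : nat -> R) : Prop :=
  char_poly Omega = \prod_(k < D) ('X - ((lam k)%:C)%:P) /\
  (forall j k : nat, (j <= k)%N -> (k < D)%N -> lam k <= lam j).

(* Diagonalise Omega = U^* diag(d) U.  As the eigenvalue 1 is simple, U Psi is a basis
   vector e_k0, and all other d_k lie in [tau, beta].  In the product eigenbasis
   (conjugation by U (x) U), p_rho and f_rho only see the diagonal q(a, b) of rho:
   p = sum q(a, b) d_a and f = sum q(a, b) d_a [b = k0].  These diagonals are exactly the
   symmetric probability distributions on pairs, so zeta(1, delta, Omega) is the value
   of a linear program in q.  In each regime of delta the optimum is a mixture of two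
   symmetrised point masses, and its optimality is certified by a dual solution
   (kk, c, e): a pointwise bound c (d_a + d_b) - 2 e <= kk (d_a [b = k0] + d_b [a = k0])
   that symmetric weights q average to c p - e <= kk f. *)

From Pilot Require Import Defs.
From mathcomp Require Import all_boot all_order all_algebra.
From mathcomp Require Import reals.
From mathcomp.real_closed Require Import complex mxtens.
From mathcomp Require Import ring lra.
Import Order.TTheory GRing.Theory Num.Theory.
Local Open Scope ring_scope.

Set Implicit Arguments.
Unset Strict Implicit.
Unset Printing Implicit Defensive.

Section Adjoint.
Variable C : numClosedFieldType.

Lemma mxadjE m n (A : 'M[C]_(m, n)) i j : mxadj A i j = Num.conj (A j i).
Proof. by rewrite /mxadj !mxE. Qed.

Lemma mxadjK m n (A : 'M[C]_(m, n)) : mxadj (mxadj A) = A.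
Proof. by apply/matrixP => i j; rewrite !mxadjE conjCK. Qed.

Lemma mxadjM m n p (A : 'M[C]_(m, n)) (B : 'M[C]_(n, p)) :
  mxadj (A *m B) = mxadj B *m mxadj A.
Proof. by rewrite /mxadj map_mxM trmx_mul. Qed.

Lemma mxadjZ m n (c : C) (A : 'M[C]_(m, n)) : mxadj (c *: A) = Num.conj c *: mxadj A.
Proof. by apply/matrixP => i j; rewrite !mxE rmorphM. Qed.

Lemma mxadj_tens m n p q (A : 'M[C]_(m, n)) (B : 'M[C]_(p, q)) :
  mxadj (A *t B) = mxadj A *t mxadj B.
Proof. by apply/matrixP => i j; rewrite !mxE rmorphM. Qed.

Lemma mxadj_delta m n (i : 'I_m) (j : 'I_n) :
  mxadj (delta_mx i j : 'M[C]_(m, n)) = delta_mx j i.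
Proof. by apply/matrixP => a b; rewrite !mxE conjC_nat andbC. Qed.

Lemma tensmx11 m n : (1%:M : 'M[C]_m) *t (1%:M : 'M[C]_n) = 1%:M.
Proof.
apply/matrixP => i j.
case: (mxtens_indexP i) => a b; case: (mxtens_indexP j) => a' b'.
by rewrite tensmxE !mxE -natrM mulnb (can_eq (@mxtens_indexK m n)) xpair_eqE.
Qed.

Lemma psdmx_diag_ge0 n (M : 'M[C]_n) i : psdmx M -> 0 <= M i i.
Proof.
by case=> _ /(_ (delta_mx i 0)); rewrite mxadj_delta -rowE -colE !mxE.
Qed.

Lemma psdmx_conj m n (V : 'M[C]_(m, n)) (M : 'M[C]_n) :
  psdmx M -> psdmx (V *m M *m mxadj V).
Proof.
case=> hM pM; split; first by rewrite /Defs.hermitian !mxadjM mxadjK hM mulmxA.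
by move=> v; have := pM (mxadj V *m v); rewrite mxadjM mxadjK !mulmxA.
Qed.

Lemma psdmx_diag_mx n (r : 'rV[C]_n) : (forall i, 0 <= r 0 i) -> psdmx (diag_mx r).
Proof.
move=> r0; split.
  apply/matrixP => i j; rewrite mxadjE !mxE eq_sym.
  have [->|_] := eqVneq i j; last by rewrite !mulr0n conjC0.
  by rewrite !mulr1n conj_Creal ?ger0_real.
move=> v; rewrite mxE; apply: sumr_ge0 => i _.
rewrite mul_mx_diag !mxE mulrC mulrA.
by apply: mulr_ge0; [exact: mul_conjC_ge0 | exact: r0].
Qed.

Lemma hermitian_unitary_diag n (A : 'M[C]_n) : Defs.hermitian A ->
  exists U : 'M[C]_n, exists d : 'rV[C]_n,
    [/\ U *m mxadj U = 1%:M, mxadj U *m U = 1%:M & A = mxadj U *m diag_mx d *m U].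
Proof.
have adjE m p (B : 'M[C]_(m, p)) : (B ^t Num.conj)%sesqui = mxadj B.
  by apply/matrixP => i j; rewrite !mxE.
move=> hA; have /orthomx_spectralP AE : A \is normalmx by rewrite qualifE adjE hA.
have /unitarymxP := spectral_unitarymx A; rewrite adjE => UU.
exists (spectralmx A), (spectral_diag A); split => //; first exact: mulmx1C.
by rewrite {1}AE invmx_unitary ?spectral_unitarymx // adjE.
Qed.

End Adjoint.

Section Swap.
Variables (C : numClosedFieldType) (D : nat).
Local Notation S := (swapmx C D).

Definition swap_index (x : 'I_(D * D)) : 'I_(D * D) :=
  mxtens_index ((mxtens_unindex x).2, (mxtens_unindex x).1).

Lemma swap_indexK : involutive swap_index.
Proof.
move=> x; apply: (can_inj (@mxtens_unindexK D D)).
by rewrite /swap_index !mxtens_indexK; case: (mxtens_unindex x).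
Qed.

Lemma swap_index_tens (a b : 'I_D) :
  swap_index (mxtens_index (a, b)) = mxtens_index (b, a).
Proof. by rewrite /swap_index mxtens_indexK. Qed.

Lemma swapmxE x y : S x y = (y == swap_index x)%:R.
Proof.
rewrite mxE /swap_index -(can_eq (@mxtens_unindexK D D)) mxtens_indexK xpair_eqE.
by rewrite andbC; congr ((_ && _)%:R); exact: eq_sym.
Qed.

Lemma mulmx_swapl n (M : 'M[C]_(D * D, n)) x y : (S *m M) x y = M (swap_index x) y.
Proof.
rewrite mxE (bigD1 (swap_index x)) //= big1 ?addr0; first by rewrite swapmxE eqxx mul1r.
by move=> k /negbTE kx; rewrite swapmxE kx mul0r.
Qed.

Lemma mulmx_swapr n (M : 'M[C]_(n, D * D)) x y : (M *m S) x y = M x (swap_index y).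
Proof.
rewrite mxE (bigD1 (swap_index y)) //= big1 ?addr0.
  by rewrite swapmxE swap_indexK eqxx mulr1.
move=> k ky; rewrite swapmxE.
by rewrite eq_sym (can2_eq swap_indexK swap_indexK) (negbTE ky) mulr0.
Qed.

Lemma swapmx_tens (A B : 'M[C]_D) : S *m (A *t B) = (B *t A) *m S.
Proof.
apply/matrixP => x y; rewrite mulmx_swapl mulmx_swapr !mxE /swap_index !mxtens_indexK.
by rewrite mulrC.
Qed.

Lemma mxadj_swapmx : mxadj S = S.
Proof.
apply/matrixP => x y; rewrite mxadjE !swapmxE conjC_nat.
by rewrite eq_sym (can2_eq swap_indexK swap_indexK).
Qed.

End Swap.

Section TensorTrace.
Variable R : comPzRingType.

Lemma sum_mxtens_index m n (F : 'I_(m * n) -> R) :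
  \sum_(x < m * n) F x = \sum_(a < m) \sum_(b < n) F (mxtens_index (a, b)).
Proof.
rewrite (reindex (@mxtens_index m n)) /=; last first.
  by exists (@mxtens_unindex m n) => x _; rewrite ?mxtens_indexK ?mxtens_unindexK.
by rewrite pair_big; apply: eq_bigr => -[a b] _.
Qed.

Lemma is_diag_mx_tens m n (A : 'M[R]_m) (B : 'M[R]_n) :
  is_diag_mx A -> is_diag_mx B -> is_diag_mx (A *t B).
Proof.
move=> /is_diag_mxP A0 /is_diag_mxP B0; apply/is_diag_mxP => x y.
case: (mxtens_indexP x) => a b; case: (mxtens_indexP y) => a' b'; rewrite tensmxE.
have [<-|aa'] := eqVneq a a'; last by rewrite A0 ?mul0r.
have [<-|bb'] := eqVneq b b'; last by rewrite B0 ?mulr0.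
by rewrite eqxx.
Qed.

Lemma mxtrace_diag_mul n (X M : 'M[R]_n) : is_diag_mx X -> \tr (X *m M) = \sum_i X i i * M i i.
Proof.
move=> /is_diag_mxP X0; apply: eq_bigr => i _; rewrite mxE (bigD1 i) //= big1 ?addr0 // => j ji.
by rewrite X0 ?mul0r // eq_sym.
Qed.

Lemma mxtrace_tens_diag_mul m n (A : 'M[R]_m) (B : 'M[R]_n) (M : 'M[R]_(m * n)) :
  is_diag_mx A -> is_diag_mx B -> \tr ((A *t B) *m M) =
  \sum_a \sum_b A a a * B b b * M (mxtens_index (a, b)) (mxtens_index (a, b)).
Proof.
move=> Ad Bd; rewrite mxtrace_diag_mul ?is_diag_mx_tens // sum_mxtens_index.
by apply: eq_bigr => a _; apply: eq_bigr => b _; rewrite tensmxE.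
Qed.

Lemma delta_mx_is_diag n (i : 'I_n) : is_diag_mx (delta_mx i i : 'M[R]_n).
Proof.
apply/is_diag_mxP => a b ab; rewrite mxE.
by have [ai|] := eqVneq a i; have [bi|] := eqVneq b i; rewrite ?andbF //= ai bi eqxx in ab.
Qed.

End TensorTrace.

Section SymmetricPairDistributions.
Variables (R : realFieldType) (D : nat).
Implicit Types (G q : 'I_D -> 'I_D -> R).

Definition pair_sum G q := \sum_a \sum_b G a b * q a b.

Definition sym_distr q :=
  [/\ forall a b, 0 <= q a b, forall a b, q a b = q b a & pair_sum (fun _ _ => 1) q = 1].

Definition pair_mass (i j a b : 'I_D) : R := ((a == i) && (b == j))%:R.

Definition sym_mass (i j a b : 'I_D) : R := pair_mass i j a b / 2 + pair_mass j i a b / 2.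

Definition mix x q1 q2 a b := x * q1 a b + (1 - x) * q2 a b.

Lemma eq_pair_sum G q1 q2 : (forall a b, q1 a b = q2 a b) -> pair_sum G q1 = pair_sum G q2.
Proof. by move=> eq_q; apply: eq_bigr => a _; apply: eq_bigr => b _; rewrite eq_q. Qed.

Lemma pair_sum_mix G x q1 q2 :
  pair_sum G (mix x q1 q2) = x * pair_sum G q1 + (1 - x) * pair_sum G q2.
Proof.
rewrite /pair_sum !big_distrr -big_split; apply: eq_bigr => a _ /=.
rewrite !big_distrr -big_split; apply: eq_bigr => b _ /=; rewrite /mix; ring.
Qed.

Lemma pair_sum_mass G i j : pair_sum G (pair_mass i j) = G i j.
Proof.
rewrite /pair_sum (bigD1 i) //= [X in _ + X]big1 ?addr0 => [|a /negbTE ai]; last first.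
  by apply: big1 => b _; rewrite /pair_mass ai mulr0.
rewrite (bigD1 j) //= big1 ?addr0 => [|b /negbTE bj]; last by rewrite /pair_mass bj andbF mulr0.
by rewrite /pair_mass !eqxx mulr1.
Qed.

Lemma pair_sum_sym_mass G i j : pair_sum G (sym_mass i j) = (G i j + G j i) / 2.
Proof.
have -> : pair_sum G (sym_mass i j) = pair_sum G (mix (1 / 2) (pair_mass i j) (pair_mass j i)).
  by apply: eq_pair_sum => a b; rewrite /sym_mass /mix; field.
by rewrite pair_sum_mix !pair_sum_mass; field.
Qed.

Lemma sym_distr_sym_mass i j : sym_distr (sym_mass i j).
Proof.
split=> [a b|a b|]; last by rewrite pair_sum_sym_mass; field.
  by rewrite /sym_mass /pair_mass; apply: addr_ge0; apply: divr_ge0; rewrite ?ler0n.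
by rewrite /sym_mass /pair_mass addrC andbC [(b == j) && _]andbC.
Qed.

Lemma sym_distr_mix x q1 q2 : 0 <= x <= 1 ->
  sym_distr q1 -> sym_distr q2 -> sym_distr (mix x q1 q2).
Proof.
move=> /andP[x0 x1] [q1_ge0 q1C q1_1] [q2_ge0 q2C q2_1]; split => [a b|a b|].
- by rewrite /mix addr_ge0 // mulr_ge0 // subr_ge0.
- by rewrite /mix q1C q2C.
- by rewrite pair_sum_mix q1_1 q2_1; ring.
Qed.

Lemma pair_sum_ge0_sym G q : (forall a b, 0 <= q a b) -> (forall a b, q a b = q b a) ->
  (forall a b, 0 <= G a b + G b a) -> 0 <= pair_sum G q.
Proof.
move=> q_ge0 qC G_ge0.
have pair_sumC : pair_sum G q = pair_sum (fun a b => G b a) q.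
  by rewrite /pair_sum exchange_big; apply: eq_bigr => a _; apply: eq_bigr => b _; rewrite qC.
suff : 0 <= pair_sum G q + pair_sum G q by lra.
rewrite {2}pair_sumC /pair_sum -big_split sumr_ge0 // => a _.
by rewrite -big_split sumr_ge0 // => b _ /=; rewrite -mulrDl mulr_ge0.
Qed.

End SymmetricPairDistributions.

Arguments pair_mass {R D}.
Arguments sym_mass {R D}.

Section PassingLP.
Variables (R : realFieldType) (D : nat) (dr : 'I_D -> R) (k0 : 'I_D).
Implicit Types (q : 'I_D -> 'I_D -> R).

Definition pass_prob q := pair_sum (fun a _ => dr a) q.
Definition pass_fid q := pair_sum (fun a b => dr a * (b == k0)%:R) q.

Definition lp_min (delta z : R) :=
  (exists2 q, sym_distr q & delta <= pass_prob q /\ pass_fid q = z) /\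
  (forall q, sym_distr q -> delta <= pass_prob q -> z <= pass_fid q).

Lemma pass_prob_mix x q1 q2 :
  pass_prob (mix x q1 q2) = x * pass_prob q1 + (1 - x) * pass_prob q2.
Proof. exact: pair_sum_mix. Qed.

Lemma pass_fid_mix x q1 q2 :
  pass_fid (mix x q1 q2) = x * pass_fid q1 + (1 - x) * pass_fid q2.
Proof. exact: pair_sum_mix. Qed.

Lemma pass_prob_sym_mass i j : pass_prob (sym_mass i j) = (dr i + dr j) / 2.
Proof. exact: pair_sum_sym_mass. Qed.

Lemma pass_fid_sym_mass i j :
  pass_fid (sym_mass i j) = (dr i * (j == k0)%:R + dr j * (i == k0)%:R) / 2.
Proof. exact: pair_sum_sym_mass. Qed.

Variables (kb kt : 'I_D) (beta tau : R).
Hypotheses (dr_k0 : dr k0 = 1) (dr_kb : dr kb = beta) (dr_kt : dr kt = tau).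
Hypothesis dr_gap : forall k, k != k0 -> tau <= dr k <= beta.
Hypotheses (tau_ge0 : 0 <= tau) (beta_lt1 : beta < 1).

(* lra and nra ignore section hypotheses: proofs copy the ones they need into the context. *)

Lemma kb_neq_k0 : kb != k0.
Proof. by apply: contraTneq beta_lt1 => kb_k0; rewrite -dr_kb kb_k0 dr_k0 ltxx. Qed.

Lemma tau_le_beta : tau <= beta.
Proof. by case/andP: (dr_gap kb_neq_k0); rewrite dr_kb. Qed.

Lemma kt_neq_k0 : kt != k0.
Proof.
apply: contraTneq beta_lt1 => kt_k0; rewrite -leNgt -dr_k0 -kt_k0 dr_kt.
exact: tau_le_beta.
Qed.

Definition dual_feasible (kk c e : R) :=
  [/\ 0 < kk, 0 <= c, c * beta <= e, 0 <= kk - c + e &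
      forall l : R, tau <= l <= beta -> 0 <= kk * l - c * (1 + l) + 2 * e].

(* kk f - c p + e is the q-average of h below; as q is symmetric it suffices that
   h a b + h b a >= 0, which is what dual feasibility guarantees. *)
Lemma weak_duality kk c e q : dual_feasible kk c e -> sym_distr q ->
  c * pass_prob q - e <= kk * pass_fid q.
Proof.
case=> _ c_ge0 ce dual_k0 dual_l [q_ge0 qC q1].
pose h a b := kk * (dr a * (b == k0)%:R) - c * dr a + e.
have hE : pair_sum h q = kk * pass_fid q + (- c) * pass_prob q + e * pair_sum (fun _ _ => 1) q.
  rewrite /pass_fid /pass_prob /pair_sum !big_distrr -!big_split; apply: eq_bigr => a _ /=.
  by rewrite !big_distrr -!big_split; apply: eq_bigr => b _ /=; rewrite /h; ring.
suff : 0 <= pair_sum h q by rewrite hE q1; lra.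
apply: pair_sum_ge0_sym => // a b; rewrite /h.
have [->|ak] := eqVneq a k0; have [->|bk] := eqVneq b k0;
  rewrite ?eqxx ?(negbTE ak) ?(negbTE bk) ?dr_k0 /=.
- lra.
- by have := dual_l _ (dr_gap bk); lra.
- by have := dual_l _ (dr_gap ak); lra.
- by case/andP: (dr_gap ak) => _ ha; case/andP: (dr_gap bk) => _ hb; nra.
Qed.

Lemma lp_min_dual delta z kk c e q : dual_feasible kk c e -> c * delta - e = z * kk ->
  sym_distr q -> delta <= pass_prob q -> pass_fid q = z -> lp_min delta z.
Proof.
move=> dual hz q_distr hq fq; split; first by exists q.
move=> q' q'_distr hq'; have [kk_gt0 c_ge0 _ _ _] := dual.
have := weak_duality dual q'_distr; have := ler_wpM2l c_ge0 hq'.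
rewrite -(ler_pM2r kk_gt0) mulrC; nra.
Qed.

Lemma lp_min_le_beta delta : delta <= beta -> lp_min delta 0.
Proof.
move=> hd; have t_ge0 := tau_ge0; have tb := tau_le_beta.
apply: (@lp_min_dual _ _ 1 0 0 (sym_mass kb kb)).
- by split=> [||||l /andP[l1 _]]; lra.
- ring.
- exact: sym_distr_sym_mass.
- by rewrite pass_prob_sym_mass dr_kb; lra.
- by rewrite pass_fid_sym_mass (negbTE kb_neq_k0) !mulr0 addr0 mul0r.
Qed.

Lemma lp_min_top delta : (1 + beta) / 2 <= delta <= 1 ->
  lp_min delta ((delta * (2 - beta) - 1) / (1 - beta)).
Proof.
move=> /andP[d1 d2]; have b_lt1 := beta_lt1; have t_ge0 := tau_ge0; have tb := tau_le_beta.
have kb0 := kb_neq_k0; have b1 : 0 < 1 - beta by lra.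
pose x := 2 * (1 - delta) / (1 - beta).
have hx : x * (1 - beta) = 2 * (1 - delta) by rewrite divfK ?lt0r_neq0.
apply: (@lp_min_dual _ _ (1 - beta) (2 - beta) 1 (mix x (sym_mass k0 kb) (sym_mass k0 k0))).
- by split=> [||||l /andP[l1 l2]]; nra.
- by rewrite divfK ?lt0r_neq0 //; ring.
- by apply: sym_distr_mix; [apply/andP; split; nra | exact: sym_distr_sym_mass..].
- by rewrite pass_prob_mix !pass_prob_sym_mass dr_k0 dr_kb; nra.
- apply: (mulIf (lt0r_neq0 b1)); rewrite divfK ?lt0r_neq0 //.
  by rewrite pass_fid_mix !pass_fid_sym_mass eqxx (negbTE kb0) dr_k0 dr_kb /=; nra.
Qed.

Lemma lp_min_large_beta delta : 1 / 2 <= beta -> beta <= delta <= (1 + beta) / 2 ->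
  lp_min delta (beta * (delta - beta) / (1 - beta)).
Proof.
move=> hb /andP[d1 d2]; have b_lt1 := beta_lt1; have t_ge0 := tau_ge0; have tb := tau_le_beta.
have kb0 := kb_neq_k0; have b1 : 0 < 1 - beta by lra.
pose x := 2 * (delta - beta) / (1 - beta).
have hx : x * (1 - beta) = 2 * (delta - beta) by rewrite divfK ?lt0r_neq0.
apply: (@lp_min_dual _ _ (1 - beta) beta (beta ^+ 2) (mix x (sym_mass k0 kb) (sym_mass kb kb))).
- by split=> [||||l /andP[l1 l2]]; nra.
- by rewrite divfK ?lt0r_neq0 //; ring.
- by apply: sym_distr_mix; [apply/andP; split; nra | exact: sym_distr_sym_mass..].
- by rewrite pass_prob_mix !pass_prob_sym_mass dr_k0 dr_kb; nra.
- apply: (mulIf (lt0r_neq0 b1)); rewrite divfK ?lt0r_neq0 //.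
  by rewrite pass_fid_mix !pass_fid_sym_mass eqxx (negbTE kb0) dr_k0 dr_kb /=; nra.
Qed.

Lemma lp_min_small_beta_lower delta : beta < 1 / 2 -> beta <= delta <= (1 + tau) / 2 ->
  lp_min delta (tau * (delta - beta) / (1 + tau - 2 * beta)).
Proof.
move=> hb /andP[d1 d2]; have t_ge0 := tau_ge0; have tb := tau_le_beta.
have kb0 := kb_neq_k0; have kt0 := kt_neq_k0; have b1 : 0 < 1 + tau - 2 * beta by lra.
pose x := 2 * (delta - beta) / (1 + tau - 2 * beta).
have hx : x * (1 + tau - 2 * beta) = 2 * (delta - beta) by rewrite divfK ?lt0r_neq0.
apply: (@lp_min_dual _ _ (1 + tau - 2 * beta) tau (tau * beta)
  (mix x (sym_mass k0 kt) (sym_mass kb kb))).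
- by split=> [||||l /andP[l1 l2]]; nra.
- by rewrite divfK ?lt0r_neq0 //; ring.
- by apply: sym_distr_mix; [apply/andP; split; nra | exact: sym_distr_sym_mass..].
- by rewrite pass_prob_mix !pass_prob_sym_mass dr_k0 dr_kb dr_kt; nra.
- apply: (mulIf (lt0r_neq0 b1)); rewrite divfK ?lt0r_neq0 //.
  by rewrite pass_fid_mix !pass_fid_sym_mass eqxx (negbTE kb0) (negbTE kt0) dr_k0 dr_kt /=; nra.
Qed.

Lemma lp_min_small_beta_upper delta : beta < 1 / 2 -> (1 + tau) / 2 <= delta <= (1 + beta) / 2 ->
  lp_min delta (delta - 1 / 2).
Proof.
move=> hb /andP[d1 d2]; have t_ge0 := tau_ge0; have tb := tau_le_beta.
have kb0 := kb_neq_k0; have kt0 := kt_neq_k0.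
have dual : dual_feasible 1 1 (1 / 2) by split=> [||||l _]; lra.
have [beta_tau|beta_tau] := eqVneq beta tau.
  apply: (lp_min_dual (q := sym_mass k0 kb) dual).
  - lra.
  - exact: sym_distr_sym_mass.
  - by rewrite pass_prob_sym_mass dr_k0 dr_kb; lra.
  - by rewrite pass_fid_sym_mass eqxx (negbTE kb0) dr_k0 dr_kb /=; lra.
have bt : 0 < beta - tau by rewrite subr_gt0 lt_neqAle eq_sym beta_tau tb.
pose x := (2 * delta - 1 - tau) / (beta - tau).
have hx : x * (beta - tau) = 2 * delta - 1 - tau by rewrite divfK ?lt0r_neq0.
apply: (lp_min_dual (q := mix x (sym_mass k0 kb) (sym_mass k0 kt)) dual).
- lra.
- by apply: sym_distr_mix; [apply/andP; split; nra | exact: sym_distr_sym_mass..].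
- by rewrite pass_prob_mix !pass_prob_sym_mass dr_k0 dr_kb dr_kt; nra.
- rewrite pass_fid_mix !pass_fid_sym_mass eqxx (negbTE kb0) (negbTE kt0).
  by rewrite dr_k0 dr_kb dr_kt /=; nra.
Qed.

End PassingLP.


Local Open Scope complex_scope.

Section Reduction.
Variable R : rcfType.
Local Notation C := R[i].
Variables (D : nat) (U : 'M[C]_D) (d : 'rV[C]_D) (Om : 'M[C]_D) (Psi : 'cV[C]_D).
Variables (dr : 'I_D -> R) (k0 : 'I_D).
Hypotheses (U_unitary : U *m mxadj U = 1%:M) (U_unitaryV : mxadj U *m U = 1%:M).
Hypothesis Om_diag : Om = mxadj U *m diag_mx d *m U.
Hypothesis d_real : forall k, d 0 k = (dr k)%:C.
Hypothesis Psi_basis : U *m (Psi *m mxadj Psi) *m mxadj U = delta_mx k0 k0.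

Let V := U *t U.
Let S := swapmx C D.

Lemma V_unitary : V *m mxadj V = 1%:M.
Proof. by rewrite /V mxadj_tens tensmx_mul U_unitary tensmx11. Qed.

Lemma V_unitaryV : mxadj V *m V = 1%:M.
Proof. by rewrite /V mxadj_tens tensmx_mul U_unitaryV tensmx11. Qed.

Lemma swapmx_V : S *m V = V *m S.
Proof. exact: swapmx_tens. Qed.

Lemma swapmx_Vadj : S *m mxadj V = mxadj V *m S.
Proof. by rewrite /V mxadj_tens swapmx_tens. Qed.

Lemma tens_conjU (A B : 'M[C]_D) :
  (mxadj U *m A *m U) *t (mxadj U *m B *m U) = mxadj V *m (A *t B) *m V.
Proof. by rewrite /V mxadj_tens !tensmx_mul. Qed.

Definition pair_diag (rho : 'M[C]_(D * D)) (a b : 'I_D) : R :=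
  complex.Re ((V *m rho *m mxadj V) (mxtens_index (a, b)) (mxtens_index (a, b))).

Lemma pair_diagE rho a b : psdmx rho ->
  (V *m rho *m mxadj V) (mxtens_index (a, b)) (mxtens_index (a, b)) = (pair_diag rho a b)%:C.
Proof.
by move=> rho_psd; symmetry; apply/RRe_real/ger0_real/psdmx_diag_ge0; exact: psdmx_conj.
Qed.

Lemma mxtrace_conjV (X rho : 'M[C]_(D * D)) :
  \tr ((mxadj V *m X *m V) *m rho) = \tr (X *m (V *m rho *m mxadj V)).
Proof. by rewrite -!mulmxA mxtrace_mulC !mulmxA. Qed.

Lemma Om_tens1 : Om *t 1%:M = mxadj V *m (diag_mx d *t 1%:M) *m V.
Proof. by rewrite -tens_conjU -Om_diag mulmx1 U_unitaryV. Qed.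

Lemma Om_tens_Psi : Om *t (Psi *m mxadj Psi) = mxadj V *m (diag_mx d *t delta_mx k0 k0) *m V.
Proof.
by rewrite -tens_conjU -Om_diag -Psi_basis !mulmxA U_unitaryV mul1mx -mulmxA U_unitaryV mulmx1.
Qed.

Lemma p_rho_pair_diag rho : psdmx rho ->
  p_rho Om rho = (pass_prob dr (pair_diag rho))%:C.
Proof.
move=> rho_psd; rewrite /p_rho Om_tens1 mxtrace_conjV mxtrace_tens_diag_mul;
  rewrite ?diag_mx_is_diag ?scalar_mx_is_diag //.
rewrite rmorph_sum; apply: eq_bigr => a _; rewrite rmorph_sum; apply: eq_bigr => b _.
by rewrite pair_diagE // !mxE !eqxx mulr1n mulr1 d_real rmorphM.
Qed.

Lemma f_rho_pair_diag rho : psdmx rho ->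
  f_rho Om Psi rho = (pass_fid dr k0 (pair_diag rho))%:C.
Proof.
move=> rho_psd; rewrite /f_rho Om_tens_Psi mxtrace_conjV mxtrace_tens_diag_mul;
  rewrite ?diag_mx_is_diag ?delta_mx_is_diag //.
rewrite rmorph_sum; apply: eq_bigr => a _; rewrite rmorph_sum; apply: eq_bigr => b _.
by rewrite pair_diagE // !mxE !eqxx mulr1n andbb d_real !rmorphM /= rmorph_nat.
Qed.

Lemma conjV_perm_invariant rho : perm_invariant2 rho ->
  V *m rho *m mxadj V = S *m (V *m rho *m mxadj V) *m S.
Proof.
move=> rho_inv; rewrite -{1}rho_inv mxadj_swapmx -/S.
by rewrite !mulmxA -swapmx_V -!mulmxA swapmx_Vadj.
Qed.

Lemma sym_distr_pair_diag rho : densitymx rho -> perm_invariant2 rho ->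
  sym_distr (pair_diag rho).
Proof.
case=> rho_psd rho_tr rho_inv; split => [a b|a b|].
- have := psdmx_diag_ge0 (mxtens_index (a, b)) (psdmx_conj V rho_psd).
  by rewrite pair_diagE // ler0c.
- apply: complexI; rewrite -!pair_diagE // {1}(conjV_perm_invariant rho_inv).
  by rewrite mulmx_swapr mulmx_swapl !swap_index_tens.
- have trV : \tr (V *m rho *m mxadj V) = \tr rho.
    by rewrite mxtrace_mulC mulmxA V_unitaryV mul1mx.
  apply: complexI; rewrite rmorph1 -rho_tr -trV /mxtrace sum_mxtens_index rmorph_sum.
  by apply: eq_bigr => a _; rewrite rmorph_sum; apply: eq_bigr => b _; rewrite pair_diagE // mul1r.
Qed.

Definition distr_state (q : 'I_D -> 'I_D -> R) : 'M[C]_(D * D) :=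
  mxadj V *m diag_mx (\row_x (q (mxtens_unindex x).1 (mxtens_unindex x).2)%:C) *m V.

Lemma conjV_distr_state q :
  V *m distr_state q *m mxadj V = diag_mx (\row_x (q (mxtens_unindex x).1 (mxtens_unindex x).2)%:C).
Proof. by rewrite !mulmxA V_unitary mul1mx -mulmxA V_unitary mulmx1. Qed.

Lemma pair_diag_distr_state q a b : pair_diag (distr_state q) a b = q a b.
Proof. by rewrite /pair_diag conjV_distr_state !mxE eqxx mulr1n mxtens_indexK. Qed.

Lemma densitymx_distr_state q : sym_distr q -> densitymx (distr_state q).
Proof.
case=> q_ge0 _ q1; split.
  rewrite /distr_state -[X in _ *m X]mxadjK; apply: psdmx_conj; apply: psdmx_diag_mx => x.
  by rewrite mxE ler0c.
rewrite mxtrace_mulC mulmxA V_unitary mul1mx mxtrace_diag sum_mxtens_index.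
have -> : 1 = (pair_sum (fun _ _ => 1) q)%:C by rewrite q1.
rewrite rmorph_sum; apply: eq_bigr => a _; rewrite rmorph_sum.
by apply: eq_bigr => b _; rewrite mxE mxtens_indexK mul1r.
Qed.

Lemma perm_invariant2_distr_state q : (forall a b, q a b = q b a) ->
  perm_invariant2 (distr_state q).
Proof.
move=> qC; rewrite /perm_invariant2 mxadj_swapmx -/S /distr_state.
set Q := diag_mx _.
have -> : S *m (mxadj V *m Q *m V) *m S = mxadj V *m (S *m Q *m S) *m V.
  by rewrite !mulmxA swapmx_Vadj -!mulmxA swapmx_V.
congr (_ *m _ *m _); apply/matrixP => x y.
rewrite mulmx_swapr mulmx_swapl !mxE (inj_eq (inv_inj (@swap_indexK D))).
by case: (mxtens_indexP x) => a b; rewrite swap_index_tens !mxtens_indexK /= qC.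
Qed.

Lemma zeta1_is_lp_min delta z : lp_min dr k0 delta z -> zeta1_is Om Psi delta%:C z%:C.
Proof.
have pair_diag_state G q : pair_sum G (pair_diag (distr_state q)) = pair_sum G q.
  by apply: eq_pair_sum => a b; exact: pair_diag_distr_state.
case=> -[q q_distr [hp hf]] opt; split.
  have [_ qC _] := q_distr; have state_psd := (densitymx_distr_state q_distr).1.
  exists (distr_state q).
    split; [exact: densitymx_distr_state | exact: perm_invariant2_distr_state |].
    by rewrite p_rho_pair_diag // lecR /pass_prob pair_diag_state.
  by rewrite f_rho_pair_diag // -hf; congr (_%:C); exact: pair_diag_state.
move=> rho [rho_dens rho_inv hp']; rewrite (f_rho_pair_diag rho_dens.1) lecR.
apply: opt; first exact: sym_distr_pair_diag.
by rewrite -lecR -(p_rho_pair_diag rho_dens.1).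
Qed.

End Reduction.

Section Eigenbasis.
Variable R : rcfType.
Local Notation C := R[i].
Variables (D : nat) (U : 'M[C]_D) (d : 'rV[C]_D) (Om : 'M[C]_D).
Hypotheses (U_unitary : U *m mxadj U = 1%:M) (U_unitaryV : mxadj U *m U = 1%:M).
Hypothesis Om_diag : Om = mxadj U *m diag_mx d *m U.

Lemma U_mul_Om : U *m Om = diag_mx d *m U.
Proof. by rewrite Om_diag !mulmxA U_unitary mul1mx. Qed.

Lemma row_mul_Om k : row k U *m Om = d 0 k *: row k U.
Proof. by rewrite -row_mul U_mul_Om row_mul row_diag_mx -scalemxAl -rowE. Qed.

Lemma row_norm k : (row k U *m mxadj (row k U)) 0 0 = 1.
Proof.
have := congr1 (fun M : 'M[C]_D => M k k) U_unitary; rewrite /= !mxE eqxx mulr1n => <-.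
by apply: eq_bigr => j _; rewrite !mxE.
Qed.

Lemma row_neq0 k : row k U != 0.
Proof.
apply/negP => /eqP r0; have := row_norm k; rewrite r0 mul0mx mxE => /eqP.
by rewrite eq_sym oner_eq0.
Qed.

Section Spectrum.
Variable lam : nat -> R.
Hypothesis char_Om : char_poly Om = \prod_(k < D) ('X - ((lam k)%:C)%:P).

Lemma eigenvalue_spectrum (x : C) : eigenvalue Om x -> exists2 j, (j < D)%N & x = (lam j)%:C.
Proof.
rewrite eigenvalue_root_char char_Om /root horner_prod.
by case/prodf_eq0 => j _; rewrite hornerXsubC subr_eq0 => /eqP ->; exists j.
Qed.

Lemma diag_entry_spectrum k : exists2 j, (j < D)%N & d 0 k = (lam j)%:C.
Proof.
apply: eigenvalue_spectrum; apply/eigenvalueP.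
by exists (row k U); [exact: row_mul_Om | exact: row_neq0].
Qed.

Lemma diag_entry_real k : d 0 k = (complex.Re (d 0 k))%:C.
Proof. by have [j _ ->] := diag_entry_spectrum k. Qed.

Lemma spectrum_diag_entry j : (j < D)%N -> exists k, d 0 k = (lam j)%:C.
Proof.
move=> jD; have : eigenvalue Om (lam j)%:C.
  rewrite eigenvalue_root_char char_Om /root horner_prod; apply/prodf_eq0.
  by exists (Ordinal jD) => //; rewrite hornerXsubC subrr.
case/eigenvalueP => v v_eig v_neq0.
have u_eig : (v *m mxadj U) *m diag_mx d = (lam j)%:C *: (v *m mxadj U).
  by rewrite scalemxAl -v_eig Om_diag !mulmxA -(mulmxA _ U) U_unitary mulmx1.
have u_neq0 : v *m mxadj U != 0.
  by apply: contraNneq v_neq0 => u0; rewrite -(mulmx1 v) -U_unitaryV mulmxA u0 mul0mx.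
move: (v *m mxadj U) u_neq0 u_eig => u /matrix0Pn [i [k u_k]] u_eig.
exists k; have := congr1 (fun M : 'rV[C]_D => M i k) u_eig.
by rewrite /= mul_mx_diag !mxE mulrC => /(mulIf u_k).
Qed.

Lemma diag_entry_gap (k0 : 'I_D) : (1 < D)%N -> lam 0 = 1 ->
  (forall j k, (j <= k)%N -> (k < D)%N -> lam k <= lam j) ->
  (forall k, k != k0 -> d 0 k != 1) ->
  forall k, k != k0 -> lam D.-1 <= complex.Re (d 0 k) <= lam 1.
Proof.
move=> D_gt1 lam0 lam_sorted d_neq1 k kk0.
have [j jD d_k] := diag_entry_spectrum k.
have j_gt0 : (0 < j)%N by rewrite lt0n; apply: contra_neq (d_neq1 _ kk0) => j0; rewrite d_k j0 lam0.
by rewrite d_k /= !lam_sorted // -ltnS prednK // (ltn_trans _ D_gt1).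
Qed.

End Spectrum.

Section Verification.
Variable Psi : 'cV[C]_D.
Hypothesis Psi_unit : mxadj Psi *m Psi = 1%:M.
Hypothesis Om_verif : verification_operator Om Psi.

Lemma diag_entry_ge0 k : 0 <= d 0 k.
Proof.
case: Om_verif => _ [_ Om_psd] _ _ _.
by have := Om_psd (mxadj (row k U)); rewrite mxadjK row_mul_Om -scalemxAl mxE row_norm mulr1.
Qed.

Let w := U *m Psi.

Lemma diag_mul_coord k : d 0 k * w k 0 = w k 0.
Proof.
case: Om_verif => _ _ _ Om_Psi _.
have := congr1 (fun M : 'cV[C]_D => M k 0) (congr1 (mulmx U) Om_Psi).
by rewrite /= mulmxA U_mul_Om -mulmxA mul_diag_mx mxE.
Qed.

Lemma coord_eq0 k : d 0 k != 1 -> w k 0 = 0.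
Proof.
move=> d_neq1; apply/eqP; have := diag_mul_coord k.
move/eqP; rewrite -subr_eq0 -{2}[w k 0]mul1r -mulrBl mulf_eq0 subr_eq0.
by rewrite (negbTE d_neq1).
Qed.

Lemma coord_norm1 k : d 0 k = 1 -> w k 0 * Num.conj (w k 0) = 1.
Proof.
case: Om_verif => Om_herm _ _ _ Om_simple d_k; set r := row k U.
have : Om *m mxadj r = mxadj r.
  by rewrite -{1}Om_herm -mxadjM row_mul_Om d_k scale1r.
case/Om_simple => c r_c.
have rE : r = Num.conj c *: mxadj Psi by rewrite -[r]mxadjK r_c mxadjZ.
have wE : w k 0 = Num.conj c.
  have -> : w k 0 = (r *m Psi) 0 0 by rewrite !mxE; apply: eq_bigr => j _; rewrite !mxE.
  by rewrite rE -scalemxAl Psi_unit !mxE eqxx mulr1.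
rewrite wE conjCK mulrC -[RHS](row_norm k) -/r r_c rE -scalemxAr -scalemxAl Psi_unit.
by rewrite !mxE eqxx mulr1.
Qed.

Lemma coord_norm : \sum_k w k 0 * Num.conj (w k 0) = 1.
Proof.
have w_unit : mxadj w *m w = 1%:M.
  by rewrite mxadjM mulmxA -(mulmxA _ (mxadj U)) U_unitaryV mulmx1.
have := congr1 (fun M : 'M[C]_1 => M 0 0) w_unit; rewrite /= [X in _ = X -> _]mxE eqxx mulr1n => <-.
by rewrite [RHS]mxE; apply: eq_bigr => k _; rewrite mxadjE mulrC.
Qed.

Lemma verification_eigenbasis : exists k0,
  [/\ d 0 k0 = 1, forall k, k != k0 -> d 0 k != 1 &
      U *m (Psi *m mxadj Psi) *m mxadj U = delta_mx k0 k0].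
Proof.
have card1 : #|[pred k | d 0 k == 1]| = 1%N.
  apply/eqP; rewrite -(eqr_nat C) -[1%:R]coord_norm -sum1_card natr_sum big_mkcond /=.
  apply/eqP/eq_bigr => k _; rewrite inE.
  by have [/coord_norm1 ->|/coord_eq0 ->] := eqVneq (d 0 k) 1; rewrite ?mul0r.
have [k0 k0E] := mem_card1 card1.
have d_k0 : d 0 k0 = 1 by have := k0E k0; rewrite !inE eqxx => /eqP.
have d_neq1 k : k != k0 -> d 0 k != 1 by move=> kk0; have := k0E k; rewrite !inE (negbTE kk0) => ->.
exists k0; split => //.
have -> : U *m (Psi *m mxadj Psi) *m mxadj U = w *m mxadj w by rewrite mxadjM !mulmxA.
apply/matrixP => a b; rewrite [LHS]mxE big_ord1 mxadjE [RHS]mxE.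
have [->|ak] := eqVneq a k0; last by rewrite coord_eq0 ?d_neq1 // mul0r.
have [->|bk] := eqVneq b k0; last by rewrite (coord_eq0 (d_neq1 _ bk)) conjC0 mulr0 andbF.
by rewrite coord_norm1 // !eqxx.
Qed.

End Verification.

End Eigenbasis.

Theorem theorem4 (R : realType) (D : nat) (Omega : 'M[R[i]]_D) (Psi : 'cV[R[i]]_D)
    (lam : nat -> R) :
  (2 <= D)%N ->
  mxadj Psi *m Psi = 1%:M ->
  verification_operator Omega Psi ->
  sorted_spectrum Omega lam ->
  lam 0%N = 1 -> lam 1%N < 1 ->
  let beta := lam 1%N in
  let tau := lam D.-1 in
  (1 / 2 <= beta ->
     forall delta : R,
       (0 <= delta <= beta -> zeta1_is Omega Psi delta%:C 0) /\
       (beta <= delta <= (1 + beta) / 2 ->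
          zeta1_is Omega Psi delta%:C (beta * (delta - beta) / (1 - beta))%:C) /\
       ((1 + beta) / 2 <= delta <= 1 ->
          zeta1_is Omega Psi delta%:C ((delta * (2 - beta) - 1) / (1 - beta))%:C)) /\
  (beta < 1 / 2 ->
     forall delta : R,
       (0 <= delta <= beta -> zeta1_is Omega Psi delta%:C 0) /\
       (beta <= delta <= (1 + tau) / 2 ->
          zeta1_is Omega Psi delta%:C (tau * (delta - beta) / (1 + tau - 2 * beta))%:C) /\
       ((1 + tau) / 2 <= delta <= (1 + beta) / 2 ->
          zeta1_is Omega Psi delta%:C (delta - 1 / 2)%:C) /\
       ((1 + beta) / 2 <= delta <= 1 ->
          zeta1_is Omega Psi delta%:C ((delta * (2 - beta) - 1) / (1 - beta))%:C)).
Proof.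
move=> D_ge2 Psi_unit Om_verif [char_Om lam_sorted] lam0 lam1 beta tau.
have Om_herm : Defs.hermitian Omega by case: Om_verif.
have [U [d [U_unitary U_unitaryV Om_diag]]] := hermitian_unitary_diag Om_herm.
have [k0 [d_k0 d_neq1 Psi_basis]] :=
  verification_eigenbasis U_unitary U_unitaryV Om_diag Psi_unit Om_verif.
pose dr k := complex.Re (d 0 k).
have d_real k : d 0 k = (dr k)%:C := diag_entry_real U_unitary Om_diag char_Om k.
have [kb d_kb] := spectrum_diag_entry U_unitary U_unitaryV Om_diag char_Om D_ge2.
have [kt d_kt] : exists kt, d 0 kt = tau%:C.
  apply: (spectrum_diag_entry U_unitary U_unitaryV Om_diag char_Om).
  by rewrite ltn_predL (ltn_trans _ D_ge2).
have dr_k0 : dr k0 = 1 by rewrite /dr d_k0.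
have dr_kb : dr kb = beta by rewrite /dr d_kb.
have dr_kt : dr kt = tau by rewrite /dr d_kt.
have dr_gap := diag_entry_gap U_unitary Om_diag char_Om D_ge2 lam0 lam_sorted d_neq1.
have tau_ge0 : 0 <= tau by rewrite -dr_kt -lecR -d_real (diag_entry_ge0 U_unitary Om_diag Om_verif).
have to_zeta := zeta1_is_lp_min U_unitary U_unitaryV Om_diag d_real Psi_basis.
split=> hb delta; [split; [|split] | split; [|split; [|split]]] => hdelta; apply: to_zeta.
- by case/andP: hdelta => _; exact: (lp_min_le_beta dr_k0 dr_kb dr_gap tau_ge0 lam1).
- exact: (lp_min_large_beta dr_k0 dr_kb dr_gap tau_ge0 lam1 hb).
- exact: (lp_min_top dr_k0 dr_kb dr_gap tau_ge0 lam1).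
- by case/andP: hdelta => _; exact: (lp_min_le_beta dr_k0 dr_kb dr_gap tau_ge0 lam1).
- exact: (lp_min_small_beta_lower dr_k0 dr_kb dr_kt dr_gap tau_ge0 lam1 hb).
- exact: (lp_min_small_beta_upper dr_k0 dr_kb dr_kt dr_gap tau_ge0 lam1 hb).
- exact: (lp_min_top dr_k0 dr_kb dr_gap tau_ge0 lam1).
Qed.
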